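(* Fix a general instance satisfying the unique-default-action assumption, and a bias $\alpha^\star\in(0,1]$. Let $\tau=\{(p_i,\nu_i)\}_{i=1}^k$ be any Bayes-plausible scheme, i.e. $p_i\ge0$, $\sum_ip_i=1$, $\nu_i\in\Delta(\Omega)$, $\sum_ip_i\nu_i=\mu_0$. For each $i$, let $a_i$ be any maximizer over $A$ of $\sum_\omega\big((1-\alpha^\star)\mu_0(\omega)+\alpha^\star\nu_i(\omega)\big)u_R(\cdot,\omega)$. Then $$\sum_ip_i\sum_\omega\nu_i(\omega)u_R(a_i,\omega)\ \ge\ \sum_\omega\mu_0(\omega)u_R(a_0,\omega).$$
   Context: Finite $\Omega$ and $A$, prior $\mu_0\in\Delta(\Omega)$, receiver utility $u_R:A\times\Omega\to\mathbb R$. The default action $a_0$ is the unique maximizer of $\sum_\omega\mu_0(\omega)u_R(a,\omega)$ over $a\in A$. A receiver with bias $\alpha^\star$ acts optimally with respect to the distorted belief $(1-\alpha^\star)\mu_0+\alpha^\star\nu$. The left-hand side is the receiver's true ex-ante expected utility under $\tau$; the right-hand side is her utility without persuasion. *)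

From mathcomp Require Import all_boot all_order all_algebra.
Set Implicit Arguments. Unset Strict Implicit. Unset Printing Implicit Defensive.
Import Order.TTheory GRing.Theory Num.Theory.
Local Open Scope ring_scope.

Definition is_dist (R : realFieldType) (Omega : finType) (mu : Omega -> R) : Prop :=
  (forall w, 0 <= mu w) /\ \sum_(w : Omega) mu w = 1.

Definition exp_util (R : realFieldType) (Omega A : finType)
  (uR : A -> Omega -> R) (mu : Omega -> R) (a : A) : R :=
  \sum_(w : Omega) mu w * uR a w.

Definition is_maximizer (R : realFieldType) (Omega A : finType)
  (uR : A -> Omega -> R) (mu : Omega -> R) (a : A) : Prop :=
  forall b : A, exp_util uR mu b <= exp_util uR mu a.

Definition unique_maximizer (R : realFieldType) (Omega A : finType)
  (uR : A -> Omega -> R) (mu : Omega -> R) (a : A) : Prop :=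
  is_maximizer uR mu a /\ forall b : A, is_maximizer uR mu b -> b = a.

Definition distort (R : realFieldType) (Omega : finType)
  (alpha : R) (mu0 nu : Omega -> R) : Omega -> R :=
  fun w => (1 - alpha) * mu0 w + alpha * nu w.

From mathcomp Require Import all_boot all_order all_algebra.
Import Order.TTheory GRing.Theory Num.Theory.
Local Open Scope ring_scope.

(* Bayes plausibility writes the default utility as the p-average of the
   nu_i-utilities of a0, so it suffices to compare termwise.  For each i, a_i
   beats a0 under the distorted belief while a0 beats a_i under mu0; as the
   distorted utility is the (1 - alpha, alpha)-mixture of the two, the nu_i
   part must favour a_i. *)

Section ExpectedUtility.
Variables (R : realFieldType) (Omega A : finType) (uR : A -> Omega -> R).

Lemma exp_util_distort alpha mu0 nu b :
  exp_util uR (distort alpha mu0 nu) b =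
  (1 - alpha) * exp_util uR mu0 b + alpha * exp_util uR nu b.
Proof.
rewrite /exp_util /distort !mulr_sumr -big_split /=.
by apply: eq_bigr => w _; rewrite mulrDl !mulrA.
Qed.

Lemma exp_util_mixture (I : finType) (p : I -> R) (nu : I -> Omega -> R) b :
  exp_util uR (fun w => \sum_i p i * nu i w) b =
  \sum_i p i * exp_util uR (nu i) b.
Proof.
rewrite /exp_util; under [RHS]eq_bigr => i _ do rewrite mulr_sumr.
rewrite exchange_big /=; apply: eq_bigr => w _.
by rewrite mulr_suml; apply: eq_bigr => i _; rewrite mulrA.
Qed.

Lemma distort_maximizer_ge alpha mu0 nu a b :
  0 < alpha -> alpha <= 1 ->
  is_maximizer uR mu0 b -> is_maximizer uR (distort alpha mu0 nu) a ->
  exp_util uR nu b <= exp_util uR nu a.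
Proof.
move=> alpha_gt0 alpha_le1 max_b max_a.
have mixed_le := max_a b; rewrite !exp_util_distort in mixed_le.
have mu0_le : (1 - alpha) * exp_util uR mu0 a <= (1 - alpha) * exp_util uR mu0 b.
  by rewrite ler_wpM2l ?subr_ge0.
rewrite -(ler_pM2l alpha_gt0) -(lerD2l ((1 - alpha) * exp_util uR mu0 b)).
apply: le_trans mixed_le _.
by rewrite lerD2r.
Qed.

End ExpectedUtility.

Theorem propositionE2 (R : realFieldType) (Omega A : finType)
  (mu0 : Omega -> R) (uR : A -> Omega -> R) (a0 : A)
  (alpha : R) (k : nat) (p : 'I_k -> R) (nu : 'I_k -> Omega -> R)
  (a : 'I_k -> A) :
  is_dist mu0 ->
  unique_maximizer uR mu0 a0 ->
  0 < alpha -> alpha <= 1 ->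
  (forall i, 0 <= p i) -> \sum_(i < k) p i = 1 ->
  (forall i, is_dist (nu i)) ->
  (forall w, \sum_(i < k) p i * nu i w = mu0 w) ->
  (forall i, is_maximizer uR (distort alpha mu0 (nu i)) (a i)) ->
  \sum_(i < k) p i * exp_util uR (nu i) (a i) >= exp_util uR mu0 a0.
Proof.
move=> _ [max_a0 _] alpha_gt0 alpha_le1 p_ge0 _ _ plausible max_a.
have -> : exp_util uR mu0 a0 = \sum_(i < k) p i * exp_util uR (nu i) a0.
  by rewrite -exp_util_mixture; apply: eq_bigr => w _; rewrite plausible.
apply: ler_sum => i _; rewrite ler_wpM2l //.
exact: distort_maximizer_ge alpha_gt0 alpha_le1 max_a0 (max_a i).
Qed.
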